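(* Let $G$ be a finite $2$-group having a normal subgroup $N$ with $N\cong C_2\times C_2$. Then $G$ is not a $2$-closed group.
   Context: Permutations act on the right. For $X\leq{\rm Sym}(\Omega)$, the $2$-closure of $X$ on $\Omega$ is $X^{(2),\Omega}=\{\theta\in{\rm Sym}(\Omega)\mid \forall \alpha,\beta\in\Omega\ \exists g\in X:\ \alpha^\theta=\alpha^g,\ \beta^\theta=\beta^g\}$. An abstract group $G$ is called a $2$-closed group if $H=H^{(2),\Omega}$ for every set $\Omega$ and every subgroup $H\leq{\rm Sym}(\Omega)$ with $H\cong G$. $C_2$ is the cyclic group of order $2$. *)

From mathcomp Require Import all_boot all_fingroup all_algebra all_solvable.
Set Implicit Arguments. Unset Strict Implicit. Unset Printing Implicit Defensive.
Import GroupScope.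

Definition C2xC2 := [set: 'Z_2 * 'Z_2]%G.

(* Faithful right actions of G on T correspond exactly to
   subgroups H <= Sym(T) with H isomorphic to G (H = image of the action). *)
Definition faithful_action (gT : finGroupType) (G : {group gT}) (T : Type)
    (act : T -> gT -> T) : Prop :=
  [/\ forall x, act x 1 = x,
      forall x g h, g \in G -> h \in G -> act x (g * h) = act (act x g) h
    & forall g, g \in G -> (forall x, act x g = x) -> g = 1].

(* H = H^(2),Omega where H is the image of the faithful action act:
   every permutation theta of T that agrees on each pair of points with some
   element of H is itself an element of H.  (H <= H^(2) always holds.) *)
Definition two_closed_action (gT : finGroupType) (G : {group gT}) (T : Type)
    (act : T -> gT -> T) : Prop :=
  forall theta : T -> T, bijective theta ->
    (forall a b : T, exists2 g, g \in G & theta a = act a g /\ theta b = act b g) ->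
    exists2 g, g \in G & forall x, theta x = act x g.

(* The abstract group G is 2-closed: for every set Omega and every subgroup
   H <= Sym(Omega) with H isomorphic to G, H = H^(2),Omega. *)
Definition two_closed_group (gT : finGroupType) (G : {group gT}) : Prop :=
  forall (T : Type) (act : T -> gT -> T),
    faithful_action G act -> two_closed_action G act.

From mathcomp Require Import all_boot all_fingroup all_algebra all_solvable.
Import GroupScope.
Set Implicit Arguments. Unset Strict Implicit.

(* Take a central involution c of G in N (N meets Z(G) since G is nilpotent)
   and a in N outside <[c]>, so that N = <[c]> U <[c]> a. Let G act by right
   translation on the cosets of <[c]>, <[a]> and <[a * c]>; this is faithful
   as <[a]> and <[a * c]> meet trivially. The permutation moving each coset of
   <[c]> by a and fixing every other coset is not induced by G: it would fix
   <[a]> and <[a * c]>, hence be 1, yet it moves <[c]>. On any pair of points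
   it agrees with an element of G: on <[c]> x and <[h]> y (h in {a, a * c})
   with h ^ y, which fixes <[h]> y and lies in <[c]> a = N :\: <[c]>
   (conjugation preserves N and <[c]>), so that it moves <[c]> x like a. *)

Section PiecewisePermutation.

Variables (gT : finGroupType) (G : {group gT}) (T : Type) (act : T -> gT -> T).
Hypothesis act1 : forall x, act x 1 = x.
Hypothesis actM : forall x g h, g \in G -> h \in G -> act x (g * h) = act (act x g) h.

Lemma act_invK g : g \in G -> cancel (act^~ g) (act^~ g^-1).
Proof. by move=> Gg x; rewrite -actM ?groupV // mulgV act1. Qed.

Lemma act_invKV g : g \in G -> cancel (act^~ g^-1) (act^~ g).
Proof. by move=> Gg x; rewrite -{2}[g]invgK act_invK ?groupV. Qed.

Lemma two_closed_piecewise (D : pred T) a :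
  two_closed_action G act -> a \in G -> (forall x, D (act x a) = D x) ->
  (forall x y, D x -> ~~ D y -> exists2 g, g \in G & act x g = act x a /\ act y g = y) ->
  exists2 g, g \in G & forall x, act x g = if D x then act x a else x.
Proof.
move=> closedG Ga Da mixedD.
have DaV x : D (act x a^-1) = D x by rewrite -Da act_invKV.
pose theta x := if D x then act x a else x.
have [|x y|g Gg theta_g] := closedG theta; last by exists g => // x; rewrite -theta_g.
  exists (fun x => if D x then act x a^-1 else x) => x; rewrite /theta.
    by case Dx: (D x) => /=; rewrite ?Da Dx ?act_invK.
  by case Dx: (D x) => /=; rewrite ?DaV Dx ?act_invKV.
rewrite /theta; case Dx: (D x); case Dy: (D y) => /=.
- by exists a.
- by have [g Gg [gx gy]] := mixedD x y Dx (negbT Dy); exists g; rewrite ?gx ?gy.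
- by have [g Gg [gx gy]] := mixedD y x Dy (negbT Dx); exists g; rewrite ?gx ?gy.
- by exists 1; rewrite ?act1.
Qed.

End PiecewisePermutation.

Section CosetSpaces.

Variable gT : finGroupType.
Implicit Types (G H K N C : {group gT}) (X : {set gT}).

Lemma rcoset_rcosets H G X g : g \in G -> (X :* g \in rcosets H G) = (X \in rcosets H G).
Proof. by move=> Gg; rewrite -rcosetE (acts_act (actsRs_rcosets H G)). Qed.

Lemma group_rcosets H G : (H : {set gT}) \in rcosets H G.
Proof. by apply/rcosetsP; exists 1; rewrite ?rcoset1. Qed.

Lemma group_rcosets_eq H K G : (H : {set gT}) \in rcosets K G -> (H : {set gT}) = K.
Proof.
case/rcosetsP=> x _ defH; rewrite defH; symmetry; rewrite -{1}(rcoset1 K); apply/rcoset_eqP.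
by rewrite -defH group1.
Qed.

Lemma rcoset_fixed H g : H :* g = H -> g \in H.
Proof. by move=> Hg; rewrite -Hg rcoset_refl. Qed.

Lemma rcoset_fixedE H y g : (H :* y :* g == H :* y) = (g \in H :^ y).
Proof.
by rewrite -rcosetM (sameP eqP rcoset_eqP) mem_rcoset mem_conjg conjgE invgK mulgA.
Qed.

Lemma rcoset_shift H x a g : x \in 'N(H) -> g \in H :* a -> H :* x :* g = H :* x :* a.
Proof.
move=> Nx /rcosetP[h Hh ->]; rewrite rcosetM; congr (_ :* a).
by apply/eqP; rewrite rcoset_fixedE (normP Nx).
Qed.

Lemma conjg_index2_rcoset G N C a h y :
    N <| G -> C <| G -> C \subset N -> #|N : C| = 2 ->
    a \in N :\: C -> h \in N :\: C -> y \in G -> h ^ y \in C :* a.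
Proof.
move=> /andP[_ nNG] /andP[_ nCG] sCN iCN NCa NCh Gy.
have nNy : y \in 'N(N) := subsetP nNG y Gy.
have nCy : y \in 'N(C) := subsetP nCG y Gy.
by rewrite (rcoset_index2 sCN iCN NCa) in_setD !memJ_norm // -in_setD.
Qed.

End CosetSpaces.

Section ThreeCosetSpaces.

Variables (gT : finGroupType) (G C A B : {group gT}).
Implicit Type X : {set gT}.

(* G acts by right translation on the right cosets of C, A and B; the action is
   extended trivially to all other subsets so that it lives on {set gT}. *)
Definition coset_space := rcosets C G :|: rcosets A G :|: rcosets B G.

Definition coset_act X g : {set gT} := if X \in coset_space then X :* g else X.

Lemma coset_actE X g : X \in coset_space -> coset_act X g = X :* g.
Proof. by rewrite /coset_act => ->. Qed.

Lemma coset_space_groups :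
  [/\ gval C \in coset_space, gval A \in coset_space & gval B \in coset_space].
Proof. by rewrite !inE !group_rcosets !orbT. Qed.

Lemma coset_space_rcoset X g :
  g \in G -> (X :* g \in coset_space) = (X \in coset_space).
Proof. by move=> Gg; rewrite !inE !rcoset_rcosets. Qed.

Lemma coset_act1 X : coset_act X 1 = X.
Proof. by rewrite /coset_act rcoset1; case: ifP. Qed.

Lemma coset_actM X g h :
  g \in G -> h \in G -> coset_act X (g * h) = coset_act (coset_act X g) h.
Proof.
move=> Gg Gh; rewrite /coset_act.
by case OX: (X \in coset_space); rewrite ?coset_space_rcoset ?OX ?rcosetM.
Qed.

Lemma coset_act_faithful : A :&: B = 1 -> faithful_action G coset_act.
Proof.
move=> tiAB; split; [exact: coset_act1 | exact: coset_actM |].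
have [_ OA OB] := coset_space_groups.
move=> g Gg fixg; have: g \in A :&: B.
  by rewrite inE !rcoset_fixed // -coset_actE ?fixg.
by rewrite tiAB => /set1gP.
Qed.

Theorem not_two_closed_of_coset_spaces a :
    C <| G -> a \in G -> a \notin C -> A :&: B = 1 ->
    (forall y, y \in G -> exists2 g, g \in C :* a & g \in A :^ y) ->
    (forall y, y \in G -> exists2 g, g \in C :* a & g \in B :^ y) ->
  ~ two_closed_group G.
Proof.
move=> /andP[sCG nCG] Ga notCa tiAB meetA meetB.
move/(_ _ coset_act (coset_act_faithful tiAB)) => closedG.
have [OC OA OB] := coset_space_groups.
have meet_shift (H : {group gT}) X Y :
    (forall y, y \in G -> exists2 g, g \in C :* a & g \in H :^ y) ->
    X \in rcosets C G -> Y \in rcosets H G ->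
  exists2 g, g \in G & X :* g = X :* a /\ Y :* g = Y.
- move=> meetH /rcosetsP[x Gx ->] /rcosetsP[y Gy ->].
  have [g Cag Hyg] := meetH y Gy; exists g.
    by case/rcosetP: Cag => c Cc ->; rewrite groupM // (subsetP sCG).
  by split; [apply: rcoset_shift (subsetP nCG x Gx) Cag | apply/eqP; rewrite rcoset_fixedE].
have notCH (H : {group gT}) :
  (forall y, y \in G -> exists2 g, g \in C :* a & g \in H :^ y) -> gval H \notin rcosets C G.
- move=> meetH; apply/negP=> /group_rcosets_eq defH; case/negP: notCa.
  have [g Cag] := meetH 1 (group1 G); rewrite conjsg1 defH => Cg.
  by apply: rcoset_fixed; rewrite -[RHS](rcoset_id Cg); apply/esym/rcoset_eqP.
have [|X Y CX notCY|g Gg actg] :=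
  two_closed_piecewise coset_act1 coset_actM (D := fun X => X \in rcosets C G) closedG Ga.
- by move=> X; rewrite /coset_act; case: ifP => // _; rewrite /= rcoset_rcosets.
- have OX : X \in coset_space by rewrite !inE CX.
  rewrite /coset_act OX; case OY: (Y \in coset_space); last by exists a.
  by move: OY; rewrite !inE (negbTE notCY) => /orP[]; apply: meet_shift.
have: g \in A :&: B.
  by rewrite inE !rcoset_fixed // -coset_actE ?actg /= ?(negbTE (notCH _ _)).
rewrite tiAB => /set1gP g1; case/negP: notCa; apply: rcoset_fixed.
by have := actg C; rewrite g1 coset_act1 group_rcosets coset_actE.
Qed.

End ThreeCosetSpaces.

Lemma exponent_C2xC2 : exponent C2xC2 %| 2.
Proof.
apply/exponentP => -[x y] _.
by apply/eqP; rewrite xpair_eqE; case: x y => [[|[|//]] ?] [[|[|//]] ?].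
Qed.

Lemma card_C2xC2 : #|C2xC2| = 4.
Proof. by rewrite cardsT card_prod card_ord. Qed.

Section KleinFour.

Variables (gT : finGroupType) (N : {group gT}) (c : gT).
Hypotheses (isoN : N \isog C2xC2) (Nc : c \in N) (c1 : c != 1).

Lemma order_isog_C2xC2 x : x \in N -> x != 1 -> #[x] = 2.
Proof.
move=> Nx x1; apply/(prime_nt_dvdP (isT : prime 2)); first by rewrite order_eq1.
by rewrite (dvdn_trans (dvdn_exponent Nx)) // (exponent_isog isoN) exponent_C2xC2.
Qed.

Lemma nt_setD_cycle x : x \in N :\: <[c]> -> x != 1.
Proof. by case/setDP=> _; apply: contraNneq => ->; rewrite group1. Qed.

Lemma proper_cycle_C2xC2 : <[c]> \proper N.
Proof.
by rewrite properEcard cycle_subG Nc -orderE order_isog_C2xC2 // (card_isog isoN) card_C2xC2.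
Qed.

Lemma index_cycle_C2xC2 : #|N : <[c]>| = 2.
Proof.
have [sCN _] := properP proper_cycle_C2xC2.
by rewrite -divgS // -orderE order_isog_C2xC2 // (card_isog isoN) card_C2xC2.
Qed.

Lemma mulg_setD_cycle a : a \in N :\: <[c]> -> a * c \in N :\: <[c]>.
Proof. by case/setDP=> Na notCa; rewrite inE groupMr ?cycle_id // notCa groupM. Qed.

Lemma TI_cycles_C2xC2 a : a \in N :\: <[c]> -> <[a]> :&: <[a * c]> = 1.
Proof.
move=> NCa; have NCac := mulg_setD_cycle NCa.
have /setDP[Na _] := NCa; have /setDP[Nac _] := NCac.
apply: prime_TIg; first by rewrite -orderE order_isog_C2xC2 ?nt_setD_cycle.
rewrite cycle_subG /= cycle2g ?order_isog_C2xC2 ?nt_setD_cycle //.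
by rewrite !inE negb_or nt_setD_cycle //= -{1}[a]mulg1 (inj_eq (mulgI a)) eq_sym.
Qed.

End KleinFour.

Theorem mainTheorem10 (gT : finGroupType) (G N : {group gT}) :
  2.-group G -> N <| G -> N \isog C2xC2 -> ~ two_closed_group G.
Proof.
move=> pG nsNG isoN.
have ntN : N :!=: 1 by rewrite -cardG_gt1 (card_isog isoN) card_C2xC2.
have /trivgPn[c /setIP[Nc Zc] c1] := meet_center_nil (pgroup_nil pG) nsNG ntN.
have nsCG : <[c]> <| G by apply: sub_center_normal; rewrite cycle_subG.
have [sCN [a Na notCa]] := properP (proper_cycle_C2xC2 isoN Nc c1).
have NCa : a \in N :\: <[c]> by rewrite inE notCa.
have meet_conj h : h \in N :\: <[c]> ->
    forall y, y \in G -> exists2 g, g \in <[c]> :* a & g \in <[h]> :^ y.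
  move=> NCh y Gy; exists (h ^ y); last by rewrite -cycleJ cycle_id.
  exact: conjg_index2_rcoset nsNG nsCG sCN (index_cycle_C2xC2 isoN Nc c1) NCa NCh Gy.
have Ga : a \in G := subsetP (normal_sub nsNG) a Na.
exact: (not_two_closed_of_coset_spaces nsCG Ga notCa (TI_cycles_C2xC2 isoN Nc c1 NCa)
          (meet_conj a NCa) (meet_conj _ (mulg_setD_cycle Nc NCa))).
Qed.
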